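(* Let $S\subseteq\mathbb{N}^d$ be a generalised numerical semigroup. A gap $h\in\mathcal{H}(S)$ is Frobenius allowable if and only if $h$ is a maximal element of $\mathcal{H}(S)$ with respect to the natural partial order on $\mathbb{N}^d$.
   Context: $\mathbb{N}=\{0,1,2,\dots\}$. A generalised numerical semigroup (GNS) is a submonoid $S\subseteq\mathbb{N}^d$ (i.e. $0\in S$ and $S$ is closed under addition) whose complement $\mathcal{H}(S)=\mathbb{N}^d\setminus S$ is finite; elements of $\mathcal{H}(S)$ are called gaps. The natural partial order on $\mathbb{N}^d$ is $x\le y$ iff $x^{(i)}\le y^{(i)}$ for all $i$. A relaxed monomial order is a total order $\prec$ on $\mathbb{N}^d$ such that (i) if $v\prec w$ then $v\prec w+u$ for every $u\in\mathbb{N}^d$, and (ii) $0\prec v$ for every nonzero $v\in\mathbb{N}^d$. For such an order, $F_\prec(S)=\max_\prec \mathcal{H}(S)$. A gap $h$ is Frobenius allowable if $h=F_\prec(S)$ for some relaxed monomial order $\prec$. *)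

From mathcomp Require Import all_boot.
From Stdlib Require Import List.

Set Implicit Arguments.
Unset Strict Implicit.
Unset Printing Implicit Defensive.

Definition pt (d : nat) := 'I_d -> nat.

Definition pt0 {d : nat} : pt d := fun _ => 0.
Definition ptadd {d : nat} (x y : pt d) : pt d := fun i => x i + y i.

Definition ptle {d : nat} (x y : pt d) : Prop := forall i, x i <= y i.

Definition is_gap {d : nat} (S : pt d -> Prop) (h : pt d) : Prop := ~ S h.

Definition is_GNS {d : nat} (S : pt d -> Prop) : Prop :=
  S pt0 /\
  (forall x y, S x -> S y -> S (ptadd x y)) /\
  (exists l : list (pt d), forall h, ~ S h -> In h l).

Definition is_relaxed_monomial_order {d : nat} (prec : pt d -> pt d -> Prop) : Prop :=
  (forall x, ~ prec x x) /\
  (forall x y z, prec x y -> prec y z -> prec x z) /\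
  (forall x y, prec x y \/ x = y \/ prec y x) /\
  (forall v w u, prec v w -> prec v (ptadd w u)) /\
  (forall v, v <> pt0 -> prec pt0 v).

Definition is_Frobenius_wrt {d : nat} (prec : pt d -> pt d -> Prop)
  (S : pt d -> Prop) (h : pt d) : Prop :=
  is_gap S h /\ forall g, is_gap S g -> g = h \/ prec g h.

Definition Frobenius_allowable {d : nat} (S : pt d -> Prop) (h : pt d) : Prop :=
  exists prec : pt d -> pt d -> Prop,
    is_relaxed_monomial_order prec /\ is_Frobenius_wrt prec S h.

Definition maximal_gap {d : nat} (S : pt d -> Prop) (h : pt d) : Prop :=
  is_gap S h /\ forall g, is_gap S g -> ptle h g -> g = h.

(* Forward direction: every relaxed monomial order [prec] refines the strict
   natural order of N^d, because if y = x + u with u <> 0 then [prec y x]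
   would give [prec y (x + u)] = [prec y y].  Hence nothing above the
   [prec]-largest gap can again be a gap: F_prec(S) is a maximal gap.

   Backward direction: for any weight [r : N^d -> nat] that is monotone for
   the natural order, comparing the keys (r x, |x|, x_0, ..., x_(d-1))
   lexicographically gives a relaxed monomial order, since the key is
   strictly monotone for the natural order.  For a maximal gap h we choose
   r x = 0 when x lies below some gap other than h and r x = 1 otherwise;
   then every other gap has weight 0 while h has weight 1, so h is the
   largest gap for this order. *)
From mathcomp Require Import all_boot order.
From Stdlib Require Import Classical ClassicalDescription FunctionalExtensionality.

Set Implicit Arguments.
Unset Strict Implicit.
Unset Printing Implicit Defensive.

Import Order.TTheory.

Section NaturalOrder.
Variable d : nat.
Implicit Types x y u : pt d.

Lemma ptle_trans x y z : ptle x y -> ptle y z -> ptle x z.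
Proof. by move=> lexy leyz i; apply: leq_trans (lexy i) (leyz i). Qed.

Lemma ptle_ptadd x u : ptle x (ptadd x u).
Proof. by move=> i; apply: leq_addr. Qed.

Lemma ptle_ptaddP x y : ptle x y -> y = ptadd x (fun i => y i - x i).
Proof. by move=> lexy; apply: functional_extensionality => i; rewrite /ptadd subnKC. Qed.

Definition degree x : nat := \sum_(i < d) x i.

Lemma degree_lt x y : ptle x y -> x <> y -> degree x < degree y.
Proof.
move=> lexy neqxy.
have [i ltxyi] : exists i, x i < y i.
  apply: NNPP => noi; apply: neqxy; apply: functional_extensionality => i.
  apply/eqP; rewrite eqn_leq lexy leqNgt /=; apply/negP => ltxyi.
  by apply: noi; exists i.
rewrite /degree (bigD1 i) //= [X in _ < X](bigD1 i) //=.
by rewrite -addSn leq_add // leq_sum.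
Qed.

End NaturalOrder.

Section RelaxedMonomialOrders.
Variables (d : nat) (prec : pt d -> pt d -> Prop).
Hypothesis prec_rmo : is_relaxed_monomial_order prec.

Lemma rmo_extends_ptle x y : ptle x y -> x <> y -> prec x y.
Proof.
case: prec_rmo => irr [_ [total [compat _]]] lexy neqxy.
case: (total x y) => [//|[eqxy|precyx]]; first by case: neqxy.
by case: (irr y); rewrite {2}(ptle_ptaddP lexy); apply: compat.
Qed.

Lemma Frobenius_maximal_gap (S : pt d -> Prop) h :
  is_Frobenius_wrt prec S h -> maximal_gap S h.
Proof.
case: (prec_rmo) => irr [trans _] [gap_h h_max]; split=> // g gap_g lehg.
apply: NNPP => neqgh; case: (h_max g gap_g) => [//|precgh].
by apply: (irr h); apply: trans (rmo_extends_ptle lehg (nesym neqgh)) precgh.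
Qed.

End RelaxedMonomialOrders.

Section WeightedOrder.
Variables (d : nat) (r : pt d -> nat).
Hypothesis r_mono : forall x y : pt d, ptle x y -> r x <= r y.

Definition weight_key (x : pt d) : seqlexi nat :=
  [:: r x, degree x & [seq x i | i <- enum 'I_d]].

Definition weight_lt (x y : pt d) : Prop := (weight_key x < weight_key y)%O.

(* The coordinates occur in the key, so distinct points have distinct keys. *)
Lemma weight_key_inj : injective weight_key.
Proof.
move=> x y [_ _ /eq_in_map eqxy]; apply: functional_extensionality => i.
by apply: eqxy; rewrite mem_enum.
Qed.

Lemma weight_lt_ptle (x y : pt d) : ptle x y -> x <> y -> weight_lt x y.
Proof.
move=> lexy neqxy; have ltdeg := degree_lt lexy neqxy.
rewrite /weight_lt !ltxi_cons !leEnat r_mono //=; apply/implyP=> _.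
by rewrite (ltnW ltdeg) /= leqNgt ltdeg.
Qed.

(* Comparing keys is a relaxed monomial order: axiom (i) holds since the key
   can only grow under translation, and (ii) since 0 lies below everything. *)
Lemma weight_lt_rmo : is_relaxed_monomial_order weight_lt.
Proof.
rewrite /weight_lt; split; [|split; [|split; [|split]]].
- by move=> x; rewrite ltxx.
- by move=> x y z; apply: lt_trans.
- move=> x y; case: (ltgtP (weight_key x) (weight_key y)) => [|| /weight_key_inj];
  by [left | right; right | right; left].
- move=> v w u ltvw; apply: lt_le_trans ltvw _.
  case: (classic (w = ptadd w u)) => [<- //|neq].
  exact/ltW/weight_lt_ptle/neq/ptle_ptadd.
- by move=> v /nesym; apply: weight_lt_ptle.
Qed.

End WeightedOrder.

Section GapWeight.
Variables (d : nat) (S : pt d -> Prop) (h : pt d).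

Definition below_other_gap (x : pt d) : Prop :=
  exists g, is_gap S g /\ g <> h /\ ptle x g.

Definition gap_weight (x : pt d) : nat :=
  if excluded_middle_informative (below_other_gap x) then 0 else 1.

(* Being below another gap is inherited downward, so the weight is monotone. *)
Lemma gap_weight_mono x y : ptle x y -> gap_weight x <= gap_weight y.
Proof.
rewrite /gap_weight => lexy.
case: excluded_middle_informative => // not_below_x.
case: excluded_middle_informative => // -[g [gap_g [neqgh leyg]]].
by case: not_below_x; exists g; split; [|split; [|apply: ptle_trans leyg]].
Qed.

Lemma maximal_gap_Frobenius :
  maximal_gap S h -> is_Frobenius_wrt (weight_lt gap_weight) S h.
Proof.
case=> gap_h h_max; split=> // g gap_g.
case: (classic (g = h)) => [|neqgh]; [by left | right].
have below_g : below_other_gap g by exists g; split; [|split].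
have not_below_h : ~ below_other_gap h.
  by case=> g' [gap_g' [neqg'h lehg']]; apply/neqg'h/h_max.
rewrite /weight_lt /weight_key ltxi_cons /gap_weight.
by do 2 case: excluded_middle_informative.
Qed.

End GapWeight.

Theorem theorem2p1 (d : nat) (S : pt d -> Prop) (h : pt d) :
  is_GNS S -> is_gap S h ->
  (Frobenius_allowable S h <-> maximal_gap S h).
Proof.
move=> _ _; split.
- by case=> prec [prec_rmo h_Frob]; apply: Frobenius_maximal_gap h_Frob.
- move=> h_max; exists (weight_lt (gap_weight S h)); split.
    exact/weight_lt_rmo/gap_weight_mono.
  exact: maximal_gap_Frobenius.
Qed.
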